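(* Let $(X,\mathcal T,P,\leq,\{\sigma_x:x\in X\})$ be a typed topological space with $X$ finite, let $p\in P$, and assume $\sigma$ has least $p$-neighborhood. Let $y\neq z\in X$ satisfy $z\notin p\vdash tr(\{y\})$ and $y\notin p\vdash tr(\{z\})$, and let $S$ be the $p$-surgery on $(z,y)$. Then (1) $p\vdash_S tr(\{y\})=p\vdash tr(\{y\})$; (2) $p\vdash_S tr(\{z\})\cap p\vdash_S tr(\{y\})=\emptyset$; and (3) $p\vdash_S tr(\{y\})\cup p\vdash_S tr(\{z\})=p\vdash tr(\{y\})\cup p\vdash tr(\{z\})$.
   Context: A typed topological space $(X,\mathcal T,P,\leq,\{\sigma_x:x\in X\})$ consists of a topological space $(X,\mathcal T)$, a partially ordered set $(P,\leq)$ of types, and for each $x\in X$ a partial function $\sigma_x:\{O\in\mathcal T:x\in O\}\to P$ such that for all $U,V$ in its domain, $\sigma_x(U)\leq\sigma_x(V)$ iff $U\subseteq V$. $U$ is a type-$p$ neighborhood of $x$ if $U$ is in the domain of $\sigma_x$ and $\sigma_x(U)=p$. $\sigma$ has least $p$-neighborhood if every $x$ has a type-$p$ neighborhood $p\vdash U_{min}(x)$ contained in all its type-$p$ neighborhoods; then $x$ is a $p$-accumulation point of $A$ iff $p\vdash U_{min}(x)\cap A\neq\emptyset$. $p\vdash CL_1(A)=A\cup\{p\text{-accumulation points of }A\}$, $p\vdash CL_n(A)=p\vdash CL_1(p\vdash CL_{n-1}(A))$, $p\vdash tr(A)=\bigcup_{n\ge1}p\vdash CL_n(A)$. The $p$-surgery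 $S$ on $(z,y)$ (defined when $z\notin p\vdash tr(\{y\})$ and $y\notin p\vdash tr(\{z\})$) modifies, for each $w\in p\vdash tr(\{y\})\cap p\vdash tr(\{z\})$, the least neighborhood to $p\vdash_S U_{min}(w):=p\vdash U_{min}(w)\setminus\big(p\vdash tr(\{z\})\setminus p\vdash tr(\{y\})\big)$, leaving all other least $p$-neighborhoods unchanged. In the modified space, a point $x$ is a $p$-accumulation point of $A$ iff its (possibly modified) least $p$-neighborhood meets $A$, and $p\vdash_S CL_n$, $p\vdash_S tr$ denote the closures computed in this modified space. *)

From mathcomp Require Import all_boot all_order.
Set Implicit Arguments. Unset Strict Implicit. Unset Printing Implicit Defensive.
Import Order.TTheory.
Local Open Scope order_scope.

Definition is_topology (X : finType) (T : {set {set X}}) : Prop :=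
  [/\ set0 \in T, [set: X] \in T,
      (forall F : {set {set X}}, F \subset T -> \bigcup_(U in F) U \in T) &
      (forall U V, U \in T -> V \in T -> U :&: V \in T)].

Definition is_typed_topology (X : finType) (T : {set {set X}})
    (d : Order.disp_t) (P : porderType d) (sigma : X -> {set X} -> option P) : Prop :=
  is_topology T /\
  forall x : X,
    (forall U q, sigma x U = Some q -> U \in T /\ x \in U) /\
    (forall U V p1 p2, sigma x U = Some p1 -> sigma x V = Some p2 ->
        (p1 <= p2 <-> U \subset V)).

(* Umin x is the least type-p neighborhood of x, for every x
   (so sigma has least p-neighborhood, realized by Umin). *)
Definition least_p_nbhd (X : finType) (d : Order.disp_t) (P : porderType d)
    (sigma : X -> {set X} -> option P) (p : P) (Umin : X -> {set X}) : Prop :=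
  forall x, sigma x (Umin x) = Some p /\
            (forall U, sigma x U = Some p -> Umin x \subset U).

(* Closures w.r.t. a (possibly modified) least-neighborhood assignment,
   given as a relation Nb x v  <->  v belongs to the least p-nbhd of x.
   Subsets of X are predicates X -> Prop. *)
Definition CL1 (X : Type) (Nb : X -> X -> Prop) (A : X -> Prop) : X -> Prop :=
  fun x => A x \/ exists v, Nb x v /\ A v.

(* CLn Nb n A = p |- CL_n(A) for n >= 1 (CLn 0 A = A, so CLn 1 = CL1). *)
Fixpoint CLn (X : Type) (Nb : X -> X -> Prop) (n : nat) (A : X -> Prop) : X -> Prop :=
  match n with
  | 0 => A
  | n'.+1 => CL1 Nb (CLn Nb n' A)
  end.

Definition tr (X : Type) (Nb : X -> X -> Prop) (A : X -> Prop) : X -> Prop :=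
  fun x => exists n, (1 <= n)%N /\ CLn Nb n A x.

Definition sing (X : Type) (a : X) : X -> Prop := fun x => x = a.

Definition nbhd_rel (X : finType) (Umin : X -> {set X}) : X -> X -> Prop :=
  fun x v => v \in Umin x.

(* The p-surgery on (z,y): for w in tr{y} /\ tr{z}, the least neighborhood
   becomes Umin w \ (tr{z} \ tr{y}); otherwise unchanged. *)
Definition surgery_rel (X : finType) (Umin : X -> {set X}) (z y : X) : X -> X -> Prop :=
  let ty := tr (nbhd_rel Umin) (sing y) in
  let tz := tr (nbhd_rel Umin) (sing z) in
  fun w v =>
    ((ty w /\ tz w) -> v \in Umin w /\ ~ (tz v /\ ~ ty v)) /\
    (~ (ty w /\ tz w) -> v \in Umin w).

From mathcomp Require Import all_boot all_order.
From Stdlib Require Import Classical.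

Set Implicit Arguments. Unset Strict Implicit. Unset Printing Implicit Defensive.

(* Only the least-neighbourhood relation matters: p |- tr(A) is the set of
   points from which a chain x -> v, with v in the least p-neighbourhood of x,
   leads into A.  The surgery deletes only edges from tr{y} /\ tr{z} into
   tr{z} \ tr{y}.  No such edge lies on a chain into y, since such a chain
   stays inside tr{y}; no such edge starts outside tr{y}, and tr{y} is closed
   under predecessors, so chains to z from outside tr{y} survive intact; and
   a surgered chain starting in tr{y} can never leave tr{y}, hence never
   reaches z. *)

Section Transitive_closure.

Variable X : Type.
Implicit Types (N M : X -> X -> Prop) (A G : X -> Prop).

Lemma tr_base N A x : A x -> tr N A x.
Proof. by move=> Ax; exists 1; split=> //; left. Qed.

Lemma tr_step N A x v : N x v -> tr N A v -> tr N A x.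
Proof. by move=> xv [n [_ vA]]; exists n.+1; split=> //; right; exists v. Qed.

Lemma tr_ind N A (Q : X -> Prop) :
    (forall x, A x -> Q x) ->
    (forall x v, N x v -> tr N A v -> Q v -> Q x) ->
  forall x, tr N A x -> Q x.
Proof.
move=> QA Qstep x [n [_]]; elim: n x => [|n IH] x /=; first exact: QA.
case=> [|[v [xv vA]]]; first exact: IH.
by apply: Qstep xv _ (IH _ vA); exists n.+1; split=> //; left.
Qed.

Lemma tr_keep_edges_into N M A :
    (forall x v, N x v -> tr N A v -> M x v) ->
  forall x, tr N A x -> tr M A x.
Proof.
move=> keep; apply: tr_ind => [x|x v xv vA]; first exact: tr_base.
exact/tr_step/keep.
Qed.

Lemma tr_subrel N M A :
  (forall x v, N x v -> M x v) -> forall x, tr N A x -> tr M A x.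
Proof. by move=> sub; apply: tr_keep_edges_into => x v /sub. Qed.

Lemma tr_keep_edges_within N M A G :
    (forall x v, G x -> N x v -> G v /\ M x v) ->
  forall x, G x -> tr N A x -> tr M A x.
Proof.
move=> keep x Gx trx; elim/tr_ind: trx Gx => [x' Ax _|x' v xv _ IH Gx'].
  exact: tr_base.
by have [Gv xv2] := keep _ _ Gx' xv; apply: tr_step xv2 (IH Gv).
Qed.

End Transitive_closure.

Section Surgery.

Variables (X : finType) (Umin : X -> {set X}) (z y : X).

Local Notation R := (nbhd_rel Umin).
Local Notation S := (surgery_rel Umin z y).
Local Notation ty := (tr R (sing y)).
Local Notation tz := (tr R (sing z)).

Lemma surgery_subrel x v : S x v -> R x v.
Proof. by case=> cut keep; case: (classic (ty x /\ tz x)) => [/cut[]|/keep]. Qed.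

Lemma surgery_keeps_edges_into_ty x v : R x v -> ty v -> S x v.
Proof. by move=> xv tyv; split=> // _; split=> // -[]. Qed.

Lemma surgery_keeps_edges_off_ty x v : ~ ty x -> R x v -> S x v.
Proof. by move=> ntyx xv; split=> // -[/ntyx]. Qed.

Lemma surgery_cuts_exit_from_ty x v : ty x -> S x v -> tz v -> ~ ~ ty v.
Proof.
move=> tyx xv tzv ntyv.
have tzx : tz x := tr_step (surgery_subrel xv) tzv.
by case: xv => [cut _]; case: (cut (conj tyx tzx)) => _; apply.
Qed.

Lemma tr_surgery_y w : tr S (sing y) w <-> ty w.
Proof.
split; first exact/tr_subrel/surgery_subrel.
exact/tr_keep_edges_into/surgery_keeps_edges_into_ty.
Qed.

Lemma tr_surgery_z_notin_ty : ~ ty z -> forall w, tr S (sing z) w -> ~ ty w.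
Proof.
move=> nz; apply: tr_ind => [_ -> // | x v xv vz ntyv tyx].
exact: (surgery_cuts_exit_from_ty tyx xv (tr_subrel surgery_subrel vz)).
Qed.

Lemma tr_surgery_z_off_ty w : ~ ty w -> tz w -> tr S (sing z) w.
Proof.
apply: (tr_keep_edges_within (G := fun x => ~ ty x)) => x v ntyx xv; split.
  by move=> tyv; apply/ntyx/(tr_step xv).
exact: surgery_keeps_edges_off_ty.
Qed.

End Surgery.

Theorem proposition3p13 (X : finType) (T : {set {set X}})
    (d : Order.disp_t) (P : porderType d) (sigma : X -> {set X} -> option P)
    (p : P) (Umin : X -> {set X}) (y z : X) :
  is_typed_topology T sigma ->
  least_p_nbhd sigma p Umin ->
  y <> z ->
  ~ tr (nbhd_rel Umin) (sing y) z ->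
  ~ tr (nbhd_rel Umin) (sing z) y ->
  (forall w, tr (surgery_rel Umin z y) (sing y) w <-> tr (nbhd_rel Umin) (sing y) w) /\
  (forall w, ~ (tr (surgery_rel Umin z y) (sing z) w /\
                tr (surgery_rel Umin z y) (sing y) w)) /\
  (forall w, (tr (surgery_rel Umin z y) (sing y) w \/ tr (surgery_rel Umin z y) (sing z) w)
             <-> (tr (nbhd_rel Umin) (sing y) w \/ tr (nbhd_rel Umin) (sing z) w)).
Proof.
move=> _ _ _ nz _.
split; first exact: tr_surgery_y.
split=> w; rewrite tr_surgery_y.
  by case=> /(tr_surgery_z_notin_ty nz).
split=> -[tyw|tzw]; first by left.
- by right; apply: tr_subrel tzw; apply: surgery_subrel.
- by left.
have [tyw|ntyw] := classic (tr (nbhd_rel Umin) (sing y) w); first by left.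
by right; apply: tr_surgery_z_off_ty.
Qed.
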